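(* The path functor $P:\mathsf{RSRel}\to\mathsf{Met}$ is a morphism of weakly closed monoidal refinements of $\mathsf{Set}$ from $(\mathsf{RSRel},1,\times,M,q)$ to $(\mathsf{Met},1,\times,\infty\cdot-,p)$; that is: (1) $P$ is strict symmetric monoidal from $(\mathsf{RSRel},1,\times)$ to $(\mathsf{Met},1,\times)$; (2) $(\mathrm{Id}_{\mathsf{Set}},P)$ is a map of adjunctions from $M\dashv q$ to $\infty\cdot-\dashv p$ (in particular $P\circ M=\infty\cdot-$ and $p\circ P=q$); and (3) for every set $X$, $(P,P)$ is a map of adjunctions from $(-\times MX\dashv MX\Rightarrow -)$ on $\mathsf{RSRel}$ to $(-\times(\infty\cdot X)\dashv(\infty\cdot X)\multimap -)$ on $\mathsf{Met}$.
   Context: $\mathsf{RSRel}$: objects are sets with a reflexive symmetric relation, morphisms relation-preserving functions; $1$ is the one-point set with the full relation; $X\times Y$ is $|X|\times|Y|$ with $(x,y)\sim(x',y')$ iff $x\sim x'$ and $y\sim y'$; $X\Rightarrow Y$ is the set of all functions $|X|\to|Y|$ with $f\sim f'$ iff $x\sim x'$ implies $f(x)\sim f'(x')$. $q:\mathsf{RSRel}\to\mathsf{Set}$ is the forgetful functor and $M:\mathsf{Set}\to\mathsf{RSRel}$ equips a set with the equality relation ($M\dashv q$ with identity unit). $\mathsf{Met}$: extended pseudo-metric spaces ($d:|X|^2\to[0,\infty]$, $d(x,x)=0$, symmetric, triangle inequality) and non-expansive maps; $1$ is the one-point space; $X\times Y$ is $|X|\times|Y|$ with $d=\max(d_X,d_Y)$;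 for a set $X$, $\infty\cdot X$ has $d(x,x')=\infty$ for $x\neq x'$; $A\multimap B$ is the set of non-expansive maps with metric $\sup_x d_B(a(x),b(x))$; $p:\mathsf{Met}\to\mathsf{Set}$ is the forgetful functor ($\infty\cdot-\dashv p$ with identity unit). Both $(\mathsf{RSRel},1,\times,M,q)$ and $(\mathsf{Met},1,\times,\infty\cdot-,p)$ are weakly closed monoidal refinements of $\mathsf{Set}$ (a symmetric monoidal category with an adjunction $L\dashv p$ to $\mathsf{Set}$ where $p$ is strict monoidal and faithful, the unit is the identity, each $-\otimes LX$ has a right adjoint, and $(p,p)$ is a map of adjunctions to $(-\times X\dashv X\Rightarrow-)$ in $\mathsf{Set}$). A map of adjunctions $(F,G)$ from $\langle L,R,\eta\rangle:\mathbb{C}\rightharpoonup\mathbb{D}$ to $\langle L',R',\eta'\rangle:\mathbb{C}'\rightharpoonup\mathbb{D}'$ is a pair of functors with $G\circ L=L'\circ F$, $F\circ R=R'\circ G$, $F\eta=\eta'F$. $P$ sends $X\in\mathsf{RSRel}$ to $|X|$ with the path metric ($d(x,x')$ = least $k$ with a chain $x=x_0\sim x_1\sim\dots\sim x_k=x'$, or $\infty$ if none) and is the identity on morphisms. *)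

From HB Require Import structures.
From mathcomp Require Import all_boot all_order all_algebra.
From mathcomp Require Import all_classical all_reals ereal.
Set Implicit Arguments. Unset Strict Implicit. Unset Printing Implicit Defensive.
Import Order.TTheory GRing.Theory Num.Theory.
Local Open Scope classical_set_scope.
Local Open Scope ereal_scope.

Record rsrel := RSRel {
  rs_car :> Type;
  rs_rel : rs_car -> rs_car -> Prop;
  rs_refl : forall x, rs_rel x x;
  rs_sym : forall x y, rs_rel x y -> rs_rel y x }.
Arguments rs_rel : clear implicits.

Definition rs_hom (X Y : rsrel) (f : rs_car X -> rs_car Y) : Prop :=
  forall x x', rs_rel X x x' -> rs_rel Y (f x) (f x').

Definition rs_one : rsrel :=
  @RSRel unit (fun _ _ => True) (fun _ => I) (fun _ _ _ => I).

Definition rs_prod (X Y : rsrel) : rsrel.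
Proof.
refine (@RSRel (rs_car X * rs_car Y)%type
  (fun p q => rs_rel X p.1 q.1 /\ rs_rel Y p.2 q.2) _ _).
- by move=> p; split; apply: rs_refl.
- by move=> p q [h1 h2]; split; apply: rs_sym.
Defined.

Definition rs_M (X : Type) : rsrel :=
  @RSRel X (fun x y => x = y) (fun x => erefl x) (fun x y h => esym h).

Definition rs_expM (X : Type) (Y : rsrel) : rsrel.
Proof.
refine (@RSRel (X -> rs_car Y)
  (fun f g => forall x x', rs_rel (rs_M X) x x' -> rs_rel Y (f x) (g x')) _ _).
- by move=> f x x' /= ->; apply: rs_refl.
- by move=> f g h x x' /= e; apply: rs_sym; apply: h.
Defined.

Definition rs_chain (X : rsrel) (k : nat) (x y : rs_car X) : Prop :=
  exists c : nat -> rs_car X,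
    [/\ c 0%N = x, c k = y & forall i, (i < k)%N -> rs_rel X (c i) (c i.+1)].

Section Met.
Variable R : realType.

(* a carrier with a [0,oo]-valued distance; the metric axioms are the predicate is_met *)
Record pmet := PMet { pm_car :> Type; pm_d : pm_car -> pm_car -> \bar R }.
Arguments pm_d : clear implicits.

Definition is_met (A : pmet) : Prop :=
  [/\ forall x y, 0 <= pm_d A x y,
      forall x, pm_d A x x = 0,
      forall x y, pm_d A x y = pm_d A y x &
      forall x y z, pm_d A x z <= pm_d A x y + pm_d A y z].

Definition nonexpansive (A B : pmet) (f : pm_car A -> pm_car B) : Prop :=
  forall x y, pm_d B (f x) (f y) <= pm_d A x y.

Definition met_one : pmet := @PMet unit (fun _ _ => 0).

Definition met_prod (A B : pmet) : pmet :=
  @PMet (pm_car A * pm_car B)%type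
    (fun p q => Order.max (pm_d A p.1 q.1) (pm_d B p.2 q.2)).

Definition met_inf (X : Type) : pmet :=
  @PMet X (fun x y => if `[< x = y >] then 0 else +oo).

(* A -o B : non-expansive maps with the sup metric (sup taken in [0,oo]) *)
Definition met_lolli (A B : pmet) : pmet :=
  @PMet {h : pm_car A -> pm_car B | nonexpansive h}
    (fun f g => ereal_sup ([set 0] `|`
        [set pm_d B (proj1_sig f x) (proj1_sig g x) | x in [set: pm_car A]])).

(* the path functor on objects: least length of a chain, or +oo if none *)
Definition path_d (X : rsrel) (x y : rs_car X) : \bar R :=
  ereal_inf [set (k%:R)%:E | k in [set k | rs_chain k x y]].

Definition P (X : rsrel) : pmet := @PMet (rs_car X) (@path_d X).

End Met.
Arguments pm_d {R} _ _ _.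

(* Everything reduces to chains. Chains concatenate and reverse, so the path
   distance is a pseudo-metric, and relation-preserving maps send chains to
   chains. Since the relation is reflexive, a chain can be padded to any
   greater length by repeating its endpoint; hence a pair of chains can be
   given a common length, and the path distance of a product is the maximum
   of the path distances. In [M X] every chain is constant, which gives the
   distances 0 and oo. Finally, a chain of length k in [M X => B] is, by
   choice, the same as an X-indexed family of chains of length k in B; if the
   pointwise distances are bounded by a real r, every member of the family can
   be padded to length floor(r), so the path distance is the supremum of the
   pointwise ones. *)

From HB Require Import structures.
From mathcomp Require Import all_boot all_order all_algebra.
From mathcomp Require Import all_classical all_reals ereal.
From mathcomp Require Import zify.
Set Implicit Arguments. Unset Strict Implicit. Unset Printing Implicit Defensive.
Import Order.TTheory GRing.Theory Num.Theory.
Local Open Scope classical_set_scope.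
Local Open Scope ereal_scope.

Section Chains.
Variable X : rsrel.
Implicit Types x y z : X.

Lemma rs_chain_const k x : rs_chain k x x.
Proof. by exists (fun=> x); split=> // i _; apply: rs_refl. Qed.

Lemma rs_chain_sym k x y : rs_chain k x y -> rs_chain k y x.
Proof.
case=> c [c0 ck cr]; exists (fun i => c (k - i)%N); split.
- by rewrite subn0.
- by rewrite subnn.
- move=> i ik; apply: rs_sym.
  have -> : (k - i = (k - i.+1).+1)%N by lia.
  by apply: cr; lia.
Qed.

Lemma rs_chain_cat m n x y z :
  rs_chain m x y -> rs_chain n y z -> rs_chain (m + n) x z.
Proof.
case=> c [c0 cm cr] [d [d0 dn dr]].
exists (fun i => if (i <= m)%N then c i else d (i - m)%N); split.
- by rewrite leq0n.
- have [mnm|] := leqP (m + n) m; last by rewrite addnC addnK.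
  have n0 : n = 0%N by lia.
  by subst n; rewrite addn0 cm -d0.
- move=> i ilt; have [im|mi] := leqP i.+1 m; first by rewrite ltnW //; apply: cr.
  have [im'|mi'] := leqP i m.
  + have -> : i = m by lia.
    by rewrite cm subSnn -d0; apply: dr; lia.
  + have -> : (i.+1 - m = (i - m).+1)%N by lia.
    by apply: dr; lia.
Qed.

Lemma rs_chain_widen k n x y : rs_chain k x y -> (k <= n)%N -> rs_chain n x y.
Proof.
by move=> cxy /subnKC <-; apply: rs_chain_cat cxy (rs_chain_const _ _).
Qed.

End Chains.

Lemma rs_chain_map (X Y : rsrel) (f : X -> Y) k (x y : X) :
  rs_hom f -> rs_chain k x y -> rs_chain k (f x) (f y).
Proof.
move=> hf [c [c0 ck cr]]; exists (f \o c).
split=> /=; [by rewrite c0|by rewrite ck|].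
by move=> i ik; apply/hf/cr.
Qed.

Lemma rs_chain_prod (X Y : rsrel) k (p q : rs_prod X Y) :
  rs_chain k p q <-> rs_chain k p.1 q.1 /\ rs_chain k p.2 q.2.
Proof.
split.
- case=> c [c0 ck cr]; split.
  + exists (fun i => (c i).1); split; [by rewrite c0|by rewrite ck|].
    by move=> i /cr[].
  + exists (fun i => (c i).2); split; [by rewrite c0|by rewrite ck|].
    by move=> i /cr[].
- case=> -[c [c0 ck cr]] [d [d0 dk dr]].
  exists (fun i => (c i, d i)); split.
  + by rewrite c0 d0 -surjective_pairing.
  + by rewrite ck dk -surjective_pairing.
  + by move=> i ik; split; [apply: cr|apply: dr].
Qed.

Lemma rs_chain_M_eq (X : Type) k (x y : rs_M X) : rs_chain k x y -> x = y.
Proof.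
case=> c [c0 ck cr].
suff cx i : (i <= k)%N -> c i = x by rewrite -ck cx.
by elim: i => [//|i IH] ik; rewrite -IH ?(ltnW ik) //; apply/esym/cr.
Qed.

Lemma rs_chain_expM (X : Type) (B : rsrel) k (f g : rs_expM X B) :
  rs_chain k f g <-> forall x, rs_chain k (f x) (g x).
Proof.
split.
- case=> c [c0 ck cr] x; exists (fun i => c i x); split.
  + by rewrite c0.
  + by rewrite ck.
  + by move=> i ik; apply: cr.
- move=> /choice[C hC]; exists (fun i x => C x i); split.
  + by apply/funext => x; case: (hC x).
  + by apply/funext => x; case: (hC x).
  + by move=> i ik x _ <-; case: (hC x) => _ _; apply.
Qed.

Section PathDistance.
Variable R : realType.

Lemma path_d_le_chain (X : rsrel) k (x y : X) :
  rs_chain k x y -> path_d R x y <= k%:R%:E.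
Proof. by move=> cxy; apply: ereal_inf_lbound; exists k. Qed.

Lemma path_d_ge (X : rsrel) (x y : X) (r : \bar R) :
  (forall k, rs_chain k x y -> r <= k%:R%:E) -> r <= path_d R x y.
Proof. by move=> h; apply: le_ereal_inf_tmp => _ [k cxy <-]; apply: h. Qed.

Lemma le_path_d (X Y : rsrel) (x y : X) (x' y' : Y) :
  (forall k, rs_chain k x y -> rs_chain k x' y') -> path_d R x' y' <= path_d R x y.
Proof. by move=> h; apply: path_d_ge => k /h; apply: path_d_le_chain. Qed.

Variant path_d_spec (X : rsrel) (x y : X) : \bar R -> Prop :=
  | PathDInfty of (forall k, ~ rs_chain k x y) : path_d_spec x y +oo
  | PathDFin m of rs_chain m x y : path_d_spec x y m%:R%:E.

Lemma path_dP (X : rsrel) (x y : X) : path_d_spec x y (path_d R x y).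
Proof.
have [[k cxy]|nochain] := pselect (exists k, rs_chain k x y); last first.
  have -> : path_d R x y = +oo.
    apply/eqP; rewrite eq_le leey path_d_ge // => k cxy.
    by case: nochain; exists k.
  by constructor => k cxy; apply: nochain; exists k.
have ex : exists n, `[< rs_chain n x y >] by exists k; apply/asboolP.
case: (ex_minnP ex) => m /asboolP cm minm.
have -> : path_d R x y = m%:R%:E.
  apply/eqP; rewrite eq_le path_d_le_chain //=.
  by apply: path_d_ge => n cn; rewrite lee_fin ler_nat minm //; apply/asboolP.
exact: PathDFin.
Qed.

Lemma path_d_ge0 (X : rsrel) (x y : X) : 0 <= path_d R x y.
Proof. by apply: path_d_ge => k _; rewrite lee_fin. Qed.

Lemma path_d_xx (X : rsrel) (x : X) : path_d R x x = 0.
Proof.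
apply/eqP; rewrite eq_le path_d_ge0 andbT.
exact: path_d_le_chain (rs_chain_const 0 x).
Qed.

Lemma path_d_sym (X : rsrel) (x y : X) : path_d R x y = path_d R y x.
Proof. by apply/eqP; rewrite eq_le !le_path_d // => k /rs_chain_sym. Qed.

Lemma path_d_triangle (X : rsrel) (x y z : X) :
  path_d R x z <= path_d R x y + path_d R y z.
Proof.
case: (path_dP x y) => [_|m cxy].
  by rewrite addye ?leey // gt_eqF // (lt_le_trans _ (path_d_ge0 _ _)) ?ltNy0.
case: (path_dP y z) => [_|n cyz]; first by rewrite addey ?leey.
by rewrite -EFinD -natrD; apply/path_d_le_chain/(rs_chain_cat cxy cyz).
Qed.

Lemma rs_chain_trunc (X : rsrel) (x y : X) (r : R) :
  path_d R x y <= r%:E -> rs_chain (Num.truncn r) x y.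
Proof.
case: path_dP => // m cxy; rewrite lee_fin => mr.
by apply: rs_chain_widen cxy _; rewrite truncn_ge_nat // (le_trans _ mr).
Qed.

Lemma path_d_prod (X Y : rsrel) (p q : rs_prod X Y) :
  path_d R p q = Order.max (path_d R p.1 q.1) (path_d R p.2 q.2).
Proof.
apply/eqP; rewrite eq_le; apply/andP; split; last first.
  by apply: path_d_ge => k /rs_chain_prod[c1 c2]; rewrite ge_max !path_d_le_chain.
case: (path_dP p.1 q.1) => [_|m1 c1]; first by rewrite le_max leey.
case: (path_dP p.2 q.2) => [_|m2 c2]; first by rewrite le_max leey orbT.
have [m12|/ltnW m21] := leqP m1 m2.
- rewrite max_r ?lee_fin ?ler_nat // path_d_le_chain //.
  by apply/rs_chain_prod; split=> //; apply: rs_chain_widen c1 m12.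
- rewrite max_l ?lee_fin ?ler_nat // path_d_le_chain //.
  by apply/rs_chain_prod; split=> //; apply: rs_chain_widen c2 m21.
Qed.

Lemma path_d_M (X : Type) (x y : rs_M X) :
  path_d R x y = if `[< x = y >] then 0 else +oo.
Proof.
case: asboolP => [<-|xy]; first exact: path_d_xx.
by case: path_dP => // m cxy; case: xy; apply: rs_chain_M_eq cxy.
Qed.

Lemma path_d_expM (X : Type) (B : rsrel) (f g : rs_expM X B) :
  path_d R f g = ereal_sup ([set 0] `|` [set path_d R (f x) (g x) | x in [set: X]]).
Proof.
set s := ereal_sup _.
apply/eqP; rewrite eq_le; apply/andP; split; last first.
  apply: path_d_ge => k /rs_chain_expM cfg.
  by apply: ge_ereal_sup => _ [->|[x _ <-]]; rewrite ?lee_fin ?path_d_le_chain.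
have s_ge0 : 0 <= s by apply: ereal_sup_ubound; left.
have fg_le x : path_d R (f x) (g x) <= s.
  by apply: ereal_sup_ubound; right; exists x.
move: s_ge0 fg_le; case: s => [r|_ _|//]; last exact: leey.
rewrite lee_fin => r_ge0 fg_le.
apply: (@le_trans _ _ (Num.truncn r)%:R%:E); last by rewrite lee_fin truncn_le.
by apply/path_d_le_chain/rs_chain_expM => x; apply: rs_chain_trunc.
Qed.

Lemma P_is_met (X : rsrel) : is_met (P R X).
Proof.
split=> /=; [exact: path_d_ge0|exact: path_d_xx|exact: path_d_sym|].
exact: path_d_triangle.
Qed.

Lemma P_nonexpansive (X Y : rsrel) (f : X -> Y) :
  rs_hom f -> nonexpansive (A := P R X) (B := P R Y) f.
Proof. by move=> hf x y; apply: le_path_d => k; apply: rs_chain_map. Qed.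

Lemma P_one : P R rs_one = met_one R.
Proof.
by congr PMet; apply/funext => -[]; apply/funext => -[]; apply: path_d_xx.
Qed.

Lemma P_prod (X Y : rsrel) : P R (rs_prod X Y) = met_prod (P R X) (P R Y).
Proof.
by congr PMet; apply/funext => p; apply/funext => q; apply: path_d_prod.
Qed.

Lemma P_M (X : Type) : P R (rs_M X) = met_inf R X.
Proof.
by congr PMet; apply/funext => x; apply/funext => y; apply: path_d_M.
Qed.

End PathDistance.

Lemma met_inf_nonexpansive (R : realType) (X : Type) (A : pmet R) (h : X -> A) :
  (forall a, pm_d A a a = 0) -> nonexpansive (A := met_inf R X) h.
Proof. by move=> dAaa x y /=; case: asboolP => [<-|_]; rewrite ?dAaa ?leey. Qed.

Theorem theorem6 (R : realType) :
  (* P is a functor RSRel -> Met that is the identity on morphisms *)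
  (forall X : rsrel, is_met (P R X)) /\
  (forall (X Y : rsrel) (f : rs_car X -> rs_car Y),
      rs_hom f -> nonexpansive (A := P R X) (B := P R Y) f) /\
  (* (1) P is strict (symmetric) monoidal *)
  P R rs_one = met_one R /\
  (forall X Y : rsrel, P R (rs_prod X Y) = met_prod (P R X) (P R Y)) /\
  (* (2) (Id, P) is a map of adjunctions from M -| q to oo.- -| p *)
  (forall X : Type, P R (rs_M X) = met_inf R X) /\
  (forall A : rsrel, pm_car (P R A) = rs_car A) /\
  (* (3) (P, P) is a map of adjunctions from (- x MX -| MX => -)
         to (- x oo.X -| oo.X -o -), for every set X *)
  (forall (X : Type) (A : rsrel),
      P R (rs_prod A (rs_M X)) = met_prod (P R A) (met_inf R X)) /\
  (forall (X : Type) (B : rsrel),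
      (forall h : X -> rs_car B, nonexpansive (A := met_inf R X) (B := P R B) h) /\
      (forall f g : pm_car (met_lolli (met_inf R X) (P R B)),
          pm_d (P R (rs_expM X B)) (proj1_sig f) (proj1_sig g)
          = pm_d (met_lolli (met_inf R X) (P R B)) f g)) /\
  (forall (X : Type) (A : rsrel) (a : rs_car A),
      nonexpansive (A := met_inf R X) (B := met_prod (P R A) (met_inf R X))
        (fun x => (a, x))).
Proof.
split; first exact: P_is_met.
split; first exact: P_nonexpansive.
split; first exact: P_one.
split; first exact: P_prod.
split; first exact: P_M.
split; first by [].
split; first by move=> X A; rewrite P_prod P_M.
split.
  move=> X B; split=> [h|f g]; last exact: path_d_expM.
  by apply: met_inf_nonexpansive; apply: path_d_xx.
move=> X A a; apply: met_inf_nonexpansive => -[b x] /=.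
by rewrite path_d_xx asboolT // maxxx.
Qed.
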